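(* For every frame $\mathcal{F}=\langle S,R\rangle$, $\mathcal{F}\vDash \bullet q\land\Delta p\land\circ(\neg q\to p)\to\circ(\neg q\to\circ(\neg r\to p))$ (for distinct propositional variables $p,q,r$) if and only if $R$ is transitive.
   Context: Fix a nonempty set $\mathbf{P}$ of propositional variables (containing distinct $p,q,r$). $\mathcal{L}(\nabla,\bullet)$: $\phi::=p\mid\neg\phi\mid\phi\land\phi\mid\nabla\phi\mid\bullet\phi$; $\Delta\phi:=\neg\nabla\phi$, $\circ\phi:=\neg\bullet\phi$. A frame is $\langle S,R\rangle$ with $S\neq\emptyset$, $R\subseteq S\times S$; a model based on it adds $V:\mathbf{P}\to\mathcal{P}(S)$. Truth: $\mathcal{M},s\vDash\nabla\phi$ iff there are $t,u$ with $sRt$, $sRu$, $\mathcal{M},t\vDash\phi$, $\mathcal{M},u\nvDash\phi$; $\mathcal{M},s\vDash\bullet\phi$ iff $\mathcal{M},s\vDash\phi$ and there is $t$ with $sRt$, $\mathcal{M},t\nvDash\phi$. $\mathcal{F}\vDash\phi$ means $\phi$ is true at every state of every model based on $\mathcal{F}$. *)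

From Stdlib Require Import Classical.

Inductive form (P : Type) : Type :=
| Var : P -> form P
| Neg : form P -> form P
| And : form P -> form P -> form P
| Nabla : form P -> form P
| Bullet : form P -> form P.
Arguments Var {P} _.
Arguments Neg {P} _.
Arguments And {P} _ _.
Arguments Nabla {P} _.
Arguments Bullet {P} _.

Definition Imp {P} (a b : form P) : form P := Neg (And a (Neg b)).
Definition Delta {P} (a : form P) : form P := Neg (Nabla a).
Definition Circ {P} (a : form P) : form P := Neg (Bullet a).

Record frame := { S : Type; S_inhabited : inhabited S; R : S -> S -> Prop }.

Fixpoint sat {P : Type} (F : frame) (V : P -> S F -> Prop) (s : S F) (phi : form P) : Prop :=
  match phi with
  | Var x => V x s
  | Neg a => ~ sat F V s a
  | And a b => sat F V s a /\ sat F V s b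
  | Nabla a => exists t u, R F s t /\ R F s u /\ sat F V t a /\ ~ sat F V u a
  | Bullet a => sat F V s a /\ exists t, R F s t /\ ~ sat F V t a
  end.

Definition frame_valid {P : Type} (F : frame) (phi : form P) : Prop :=
  forall (V : P -> S F -> Prop) (s : S F), sat F V s phi.

Definition transitive_frame (F : frame) : Prop :=
  forall x y z : S F, R F x y -> R F y z -> R F x z.

(* If the antecedent holds at s, then q holds at s but fails at some successor t; there
   [~q -> p] must hold, so p holds at t, and by [Delta p] at every successor of s.  The
   consequent can only fail at s through a successor u and a successor w of u with p
   false at w; transitivity makes w a successor of s, which is impossible.  Conversely, if
   x R y R z but not x R z, the valuation p := R x, q := S \ {y}, r := {} satisfies the
   antecedent at x and falsifies the consequent there, through u := y and w := z. *)
From Stdlib Require Import Classical.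

Definition antecedent {P : Type} (p q : P) : form P :=
  And (And (Bullet (Var q)) (Delta (Var p))) (Circ (Imp (Neg (Var q)) (Var p))).

Definition consequent {P : Type} (p q r : P) : form P :=
  Circ (Imp (Neg (Var q)) (Circ (Imp (Neg (Var r)) (Var p)))).

Section Semantics.

Variables (P : Type) (F : frame) (V : P -> S F -> Prop).

Lemma sat_Imp (s : S F) (a b : form P) :
  sat F V s (Imp a b) <-> (sat F V s a -> sat F V s b).
Proof. simpl; split; [intros H Ha; apply NNPP; tauto | tauto]. Qed.

Lemma sat_Delta (s : S F) (a : form P) :
  sat F V s (Delta a) <->
  (forall t u, R F s t -> R F s u -> sat F V t a -> sat F V u a).
Proof.
  simpl; split.
  - intros H t u Ht Hu Hat; apply NNPP; intro Hau; apply H; now exists t, u.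
  - intros H [t [u [Ht [Hu [Hat Hau]]]]]; exact (Hau (H t u Ht Hu Hat)).
Qed.

Lemma sat_Circ (s : S F) (a : form P) :
  sat F V s (Circ a) <-> (sat F V s a -> forall t, R F s t -> sat F V t a).
Proof.
  simpl; split.
  - intros H Ha t Ht; apply NNPP; intro Hta; apply H; split; [exact Ha | now exists t].
  - intros H [Ha [t [Ht Hta]]]; exact (Hta (H Ha t Ht)).
Qed.

Variables (p q r : P).

Lemma antecedent_forces_successors (s : S F) :
  sat F V s (antecedent p q) -> forall t, R F s t -> V p t.
Proof.
  unfold antecedent; cbn [sat]; rewrite sat_Delta, sat_Circ.
  intros [[[Hq [t [Hst Hnq]]] Hagree] Hcirc] u Hsu.
  assert (Hpt : V p t).
  { assert (Himp : sat F V s (Imp (Neg (Var q)) (Var p))) by (apply sat_Imp; cbn; tauto).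
    exact (proj1 (sat_Imp t _ _) (Hcirc Himp t Hst) Hnq). }
  exact (Hagree t u Hst Hsu Hpt).
Qed.

Lemma consequent_of_two_step (s : S F) :
  (forall u w, R F s u -> R F u w -> V p w) -> sat F V s (consequent p q r).
Proof.
  intros Hp; unfold consequent; apply sat_Circ; intros _ u Hsu.
  apply sat_Imp; intros _; apply sat_Circ; intros _ w Huw.
  apply sat_Imp; intros _; exact (Hp u w Hsu Huw).
Qed.

End Semantics.

Arguments sat_Imp {P F V s a b}.
Arguments sat_Delta {P F V s a}.
Arguments sat_Circ {P F V s a}.

Lemma valid_of_transitive (P : Type) (p q r : P) (F : frame) :
  transitive_frame F -> frame_valid F (Imp (antecedent p q) (consequent p q r)).
Proof.
  intros Htrans V s; apply sat_Imp; intros Hant.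
  apply consequent_of_two_step; intros u w Hsu Huw.
  exact (antecedent_forces_successors _ _ _ _ _ _ Hant w (Htrans _ _ _ Hsu Huw)).
Qed.

Section Countermodel.

Variables (P : Type) (p q r : P).
Hypotheses (hpq : p <> q) (hpr : p <> r) (hqr : q <> r).
Variables (F : frame) (x y z : S F).
Hypotheses (Hxy : R F x y) (Hyz : R F y z) (Hxz : ~ R F x z).

Definition counter_val (v : P) (w : S F) : Prop :=
  (v = p /\ R F x w) \/ (v = q /\ w <> y).

Lemma counter_val_p (w : S F) : counter_val p w <-> R F x w.
Proof. unfold counter_val; split; [intros [[_ H] | [E _]]; [exact H | congruence] | auto]. Qed.

Lemma counter_val_q (w : S F) : counter_val q w <-> w <> y.
Proof. unfold counter_val; split; [intros [[E _] | [_ H]]; [congruence | exact H] | auto]. Qed.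

Lemma counter_val_r (w : S F) : ~ counter_val r w.
Proof. unfold counter_val; intros [[E _] | [E _]]; congruence. Qed.

Lemma counter_root_neq : x <> y.
Proof. intros ->; exact (Hxz Hyz). Qed.

Lemma counter_antecedent : sat F counter_val x (antecedent p q).
Proof.
  pose proof counter_root_neq as Hneq.
  unfold antecedent; cbn [sat]; rewrite sat_Delta, sat_Circ, counter_val_q.
  repeat split.
  - exact Hneq.
  - exists y; split; [exact Hxy | rewrite counter_val_q; tauto].
  - intros t u _ Hu _; apply counter_val_p, Hu.
  - intros _ t Ht; apply sat_Imp; intros _; apply counter_val_p, Ht.
Qed.

Lemma counter_consequent_fails : ~ sat F counter_val x (consequent p q r).
Proof.
  unfold consequent; rewrite sat_Circ; intros Hc.
  assert (Hx : sat F counter_val x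
                 (Imp (Neg (Var q)) (Circ (Imp (Neg (Var r)) (Var p))))).
  { apply sat_Imp; cbn [sat]; rewrite counter_val_q; intro Hnq.
    exfalso; exact (Hnq counter_root_neq). }
  pose proof (proj1 sat_Imp (Hc Hx y Hxy)) as Hy.
  cbn [sat] in Hy; rewrite counter_val_q in Hy.
  assert (Hpy : sat F counter_val y (Imp (Neg (Var r)) (Var p))).
  { apply sat_Imp; intros _; apply counter_val_p, Hxy. }
  pose proof (proj1 sat_Circ (Hy (fun H => H eq_refl)) Hpy z Hyz) as Hz.
  apply Hxz, counter_val_p, (proj1 sat_Imp Hz), counter_val_r.
Qed.

End Countermodel.

Lemma transitive_of_valid (P : Type) (p q r : P)
  (hpq : p <> q) (hpr : p <> r) (hqr : q <> r) (F : frame) :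
  frame_valid F (Imp (antecedent p q) (consequent p q r)) -> transitive_frame F.
Proof.
  intros Hvalid x y z Hxy Hyz; apply NNPP; intro Hxz.
  apply (counter_consequent_fails P p q r hpq hpr hqr F x y z Hxy Hyz Hxz).
  exact (proj1 sat_Imp (Hvalid _ x)
           (counter_antecedent P p q hpq F x y z Hxy Hyz Hxz)).
Qed.

Theorem proposition5 (P : Type) (p q r : P)
  (hpq : p <> q) (hpr : p <> r) (hqr : q <> r) (F : frame) :
  frame_valid F
    (Imp (And (And (Bullet (Var q)) (Delta (Var p))) (Circ (Imp (Neg (Var q)) (Var p))))
         (Circ (Imp (Neg (Var q)) (Circ (Imp (Neg (Var r)) (Var p))))))
  <-> transitive_frame F.
Proof.
  split.
  - exact (transitive_of_valid P p q r hpq hpr hqr F).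
  - exact (valid_of_transitive P p q r F).
Qed.
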